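(* Fix a positive integer $R$ and let $b_R(n)=1-\frac{1}{2^n}\sum_{k=0}^n\binom{n}{k}\max\big(\frac1R,2^{-\min(k,n-k)}\big)$. Then $\lim_{n\to\infty}b_R(n)=\frac{R-1}{R}$; consequently $\limsup_{n\to\infty}\sup\{\mathcal{C}(\ket{\psi}):\ket{\psi}\text{ an }n\text{-qubit pure state with }\mathrm{rk}(\ket{\psi})=R\}\le\frac{R-1}{R}$, i.e. asymptotically a state of CP rank $R$ has concentratable entanglement at most $\frac{R-1}{R}$.
   Context: The CP rank $\mathrm{rk}(\ket{\psi})$ of an $n$-qubit state is the minimal $r$ with $\ket{\psi}=\sum_{i=1}^r c_i\bigotimes_{j=1}^n\ket{\phi_i^{(j)}}$. The concentratable entanglement is $\mathcal{C}(\ket{\psi})=1-\frac{1}{2^{n}}\sum_{\alpha\subseteq [n]}\mathrm{Tr}[\rho_\alpha^2]$, with $\rho_\alpha$ the reduced state on $\alpha$ and $\mathrm{Tr}[\rho_\emptyset^2]=1$. *)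

From HB Require Import structures.
From mathcomp Require Import all_boot all_order all_algebra.
From mathcomp Require Import all_classical all_reals all_analysis.
From mathcomp Require Import complex.
Set Implicit Arguments. Unset Strict Implicit. Unset Printing Implicit Defensive.
Import Order.TTheory GRing.Theory Num.Theory.
Local Open Scope ring_scope.

Definition bR {R : realType} (Rk n : nat) : R :=
  1 - (2%:R ^+ n)^-1 *
      \sum_(0 <= k < n.+1)
        ('C(n, k))%:R * Num.max (Rk%:R^-1) ((2%:R ^+ minn k (n - k))^-1).

Definition bits (n : nat) := {ffun 'I_n -> bool}.

(* an n-qubit (unnormalized) vector: amplitudes on the computational basis *)
Definition qstate (R : realType) (n : nat) := bits n -> R[i].

Definition is_pure_state {R : realType} {n : nat} (psi : qstate R n) : Prop :=
  \sum_(s : bits n) psi s * (psi s)^* = 1.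

Definition prod_vec {R : realType} {n : nat} (phi : 'I_n -> bool -> R[i])
  : qstate R n := fun s => \prod_(j < n) phi j (s j).

Definition has_cp_decomp {R : realType} {n : nat} (psi : qstate R n) (r : nat)
  : Prop :=
  exists (c : 'I_r -> R[i]) (phi : 'I_r -> 'I_n -> bool -> R[i]),
    forall s, psi s = \sum_(i < r) c i * prod_vec (phi i) s.

Definition cp_rank_eq {R : realType} {n : nat} (psi : qstate R n) (r : nat)
  : Prop :=
  has_cp_decomp psi r /\ forall r', (r' < r)%N -> ~ has_cp_decomp psi r'.

(* basis strings vanishing outside S: these index the basis of the
   subsystem S *)
Definition supported {n : nat} (S : {set 'I_n}) (s : bits n) : bool :=
  [forall i, (i \notin S) ==> ~~ s i].

Definition merge {n : nat} (A : {set 'I_n}) (a b : bits n) : bits n :=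
  [ffun i => if i \in A then a i else b i].

(* reduced density matrix rho_A = Tr_{complement of A} |psi><psi|,
   entries indexed by basis strings of the subsystem A *)
Definition reduced_state {R : realType} {n : nat} (psi : qstate R n)
  (A : {set 'I_n}) (a a' : bits n) : R[i] :=
  \sum_(b : bits n | supported (~: A) b) psi (merge A a b) * (psi (merge A a' b))^*.

Definition purity {R : realType} {n : nat} (psi : qstate R n) (A : {set 'I_n})
  : R[i] :=
  \sum_(a : bits n | supported A a) \sum_(a' : bits n | supported A a')
     reduced_state psi A a a' * reduced_state psi A a' a.

(* concentratable entanglement; Tr[rho_A^2] is real, we take its real part *)
Definition conc_ent {R : realType} {n : nat} (psi : qstate R n) : R :=
  1 - (2%:R ^+ n)^-1 * \sum_(A : {set 'I_n}) complex.Re (purity psi A).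

From Pilot Require Import Defs.
From HB Require Import structures.
From mathcomp Require Import all_boot all_order all_algebra.
From mathcomp Require Import all_classical all_reals all_analysis.
From mathcomp Require Import complex.
From mathcomp Require Import ring.
Set Implicit Arguments. Unset Strict Implicit. Unset Printing Implicit Defensive.
Import Order.TTheory GRing.Theory Num.Theory numFieldNormedType.Exports.
Local Open Scope ring_scope.
Local Open Scope classical_set_scope.

(* Split the qubits into a subsystem A and its complement.  A CP decomposition
   with r terms writes psi as a sum of r products u_i (x) v_i across this cut, so
   the reduced state rho_A has rank at most r, and Cauchy-Schwarz on its
   eigenvalues gives 1 = (Tr rho_A)^2 <= r Tr rho_A^2.  Averaging over the 2^n
   subsystems A bounds C(psi) by 1 - 1/r for every n, not only asymptotically.
   The rank inequality is proved without diagonalising rho_A: a Gram-Schmidt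
   step splits psi into an r-1 term part and one product term orthogonal to it,
   and the trace and purity of rho_A then add up so that Cauchy-Schwarz for
   two numbers propagates the bound from r-1 to r terms.  Finally
   1 - b_R(n) is squeezed between 1/R and 1/R + 2 (3/4)^n. *)

Lemma sqrD_le_mulSn (C : numDomainType) (r : nat) (T t P : C) :
  0 <= T -> 0 <= t -> 0 <= P -> T ^+ 2 <= r%:R * P ->
  (T + t) ^+ 2 <= r.+1%:R * (P + t ^+ 2).
Proof.
move=> T0 t0 P0; case: r => [|r] hT.
  rewrite mul0r in hT.
  have : T ^+ 2 == 0 by rewrite eq_le hT exprn_ge0.
  rewrite expf_eq0 /= => /eqP ->.
  by rewrite add0r mul1r lerDr.
have r0 : (0 : C) < r.+1%:R by rewrite ltr0n.
rewrite -(ler_pM2l r0) -subr_ge0.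
have -> : r.+1%:R * (r.+2%:R * (P + t ^+ 2)) - r.+1%:R * (T + t) ^+ 2
        = r.+2%:R * (r.+1%:R * P - T ^+ 2) + (T - r.+1%:R * t) ^+ 2.
  by rewrite [r.+2%:R]mulrS; ring.
rewrite addr_ge0 //; first by rewrite mulr_ge0 // subr_ge0.
by rewrite real_exprn_even_ge0 // rpredB ?rpredM ?realn ?ger0_real.
Qed.

Definition inprod (C : numClosedFieldType) (K : finType) (P : pred K)
  (f g : K -> C) : C := \sum_(k | P k) f k * (g k)^*.

Section InnerProduct.
Variables (C : numClosedFieldType) (K : finType) (P : pred K).

Lemma inprodC (f g : K -> C) : inprod P g f = (inprod P f g)^*.
Proof.
by rewrite /inprod rmorph_sum; apply: eq_bigr => k _; rewrite rmorphM /= conjCK mulrC.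
Qed.

Lemma inprod_ge0 (f : K -> C) : 0 <= inprod P f f.
Proof. by apply: sumr_ge0 => k _; apply: mul_conjC_ge0. Qed.

Lemma inprod_eq0 (f : K -> C) : inprod P f f = 0 -> forall k, P k -> f k = 0.
Proof.
move=> /(psumr_eq0P (fun k _ => mul_conjC_ge0 (f k))) f0 k Pk.
by apply/eqP; rewrite -mul_conjC_eq0 f0.
Qed.

Lemma inprod_sumZl (r : nat) (c : 'I_r -> C) (f : 'I_r -> K -> C) (g : K -> C) :
  inprod P (fun k => \sum_(i < r) c i * f i k) g = \sum_(i < r) c i * inprod P (f i) g.
Proof.
rewrite /inprod; under eq_bigr do rewrite mulr_suml.
rewrite exchange_big; apply: eq_bigr => i _; rewrite mulr_sumr.
by apply: eq_bigr => k _; rewrite mulrA.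
Qed.

Lemma inprodDZ (f g e : K -> C) (c d : C) :
  inprod P (fun k => f k + c * e k) (fun k => g k + d * e k) =
  inprod P f g + d^* * inprod P f e + c * inprod P e g + c * d^* * inprod P e e.
Proof.
rewrite /inprod !mulr_sumr -!big_split /=; apply: eq_bigr => k _.
by rewrite rmorphD rmorphM /=; ring.
Qed.

(* When [inprod P e e = 0] the coefficient is [0] (as [x / 0 = 0]) and [e]
   vanishes on [P], so the projection is orthogonal in that case too. *)
Lemma inprod_proj_orth (f e : K -> C) :
  inprod P (fun k => f k - inprod P f e / inprod P e e * e k) e = 0.
Proof.
have -> : inprod P (fun k => f k - inprod P f e / inprod P e e * e k) e
        = inprod P f e - inprod P f e / inprod P e e * inprod P e e.
  by rewrite /inprod mulr_sumr -sumrB; apply: eq_bigr => k _; ring.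
have [E0|E0] := eqVneq (inprod P e e) 0; last by rewrite divfK ?subrr.
rewrite E0 mulr0 subr0; apply: big1 => k Pk.
by rewrite (inprod_eq0 E0 Pk) conjC0 mulr0.
Qed.

End InnerProduct.

(* A vector of a bipartite system is given by its amplitude matrix [psi a b],
   whose row and column indices are cut out of finite types by [PA] and [PB]. *)
Section ReducedState.
Variables (C : numClosedFieldType) (I J : finType) (PA : pred I) (PB : pred J).

Definition rdm (psi : I -> J -> C) (a a' : I) : C := inprod PB (psi a) (psi a').

Definition rdm_tr (psi : I -> J -> C) : C := \sum_(a | PA a) rdm psi a a.

Definition rdm_purity (psi : I -> J -> C) : C :=
  \sum_(a | PA a) \sum_(a' | PA a') rdm psi a a' * rdm psi a' a.

Definition schmidt_rank_le (r : nat) (psi : I -> J -> C) : Prop :=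
  exists (u : 'I_r -> I -> C) (v : 'I_r -> J -> C),
    forall a b, PA a -> PB b -> psi a b = \sum_(i < r) u i a * v i b.

Lemma rdm_tr_ge0 psi : 0 <= rdm_tr psi.
Proof. by apply: sumr_ge0 => a _; apply: inprod_ge0. Qed.

Lemma rdm_purity_ge0 psi : 0 <= rdm_purity psi.
Proof.
apply: sumr_ge0 => a _; apply: sumr_ge0 => a' _.
by rewrite /rdm (inprodC PB (psi a)) mul_conjC_ge0.
Qed.

Section OrthogonalSplit.
Variables (psi psi' : I -> J -> C) (x : I -> C) (e : J -> C).
Hypothesis psi_split : forall a b, PA a -> PB b -> psi a b = psi' a b + x a * e b.
Hypothesis psi'_orth : forall a, inprod PB (psi' a) e = 0.

Lemma rdm_split a a' : PA a -> PA a' ->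
  rdm psi a a' = rdm psi' a a' + inprod PB e e * (x a * (x a')^*).
Proof.
move=> PAa PAa'.
transitivity (inprod PB (fun b => psi' a b + x a * e b) (fun b => psi' a' b + x a' * e b)).
  by apply: eq_bigr => b PBb; rewrite !psi_split.
rewrite inprodDZ (inprodC _ _ e) !psi'_orth conjC0 /rdm; ring.
Qed.

Lemma rdm_tr_split : rdm_tr psi = rdm_tr psi' + inprod PB e e * inprod PA x x.
Proof.
rewrite /rdm_tr [inprod PA x x]/inprod mulr_sumr -big_split /=.
by apply: eq_bigr => a PAa; rewrite rdm_split.
Qed.

Lemma rdm_purity_split_ge :
  rdm_purity psi' + (inprod PB e e * inprod PA x x) ^+ 2 <= rdm_purity psi.
Proof.
set E := inprod PB e e.
pose Q := \sum_(a | PA a) \sum_(a' | PA a') rdm psi' a a' * (x a' * (x a)^*).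
(* the cross terms are the squared norm of [b |-> \sum_a psi' a b * (x a)^*] *)
have Q_ge0 : 0 <= Q.
  suff -> : Q = inprod PB (fun b => \sum_(a | PA a) psi' a b * (x a)^*)
                          (fun b => \sum_(a | PA a) psi' a b * (x a)^*).
    exact: inprod_ge0.
  rewrite /Q /rdm /inprod; under eq_bigr do under eq_bigr do rewrite mulr_suml.
  under eq_bigr do rewrite exchange_big /=.
  rewrite exchange_big; apply: eq_bigr => b _.
  rewrite rmorph_sum mulr_suml; apply: eq_bigr => a _.
  rewrite mulr_sumr; apply: eq_bigr => a' _.
  by rewrite rmorphM /= conjCK; ring.
have cross : \sum_(a | PA a) \sum_(a' | PA a') x a * (x a')^* * rdm psi' a' a = Q.
  rewrite /Q exchange_big; apply: eq_bigr => a _.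
  by apply: eq_bigr => a' _; rewrite mulrC.
have -> : rdm_purity psi = rdm_purity psi' + E * Q + E * Q + (E * inprod PA x x) ^+ 2.
  transitivity (\sum_(a | PA a) \sum_(a' | PA a')
      (rdm psi' a a' * rdm psi' a' a + E * (rdm psi' a a' * (x a' * (x a)^*))
       + E * (x a * (x a')^* * rdm psi' a' a)
       + E * (x a * (x a)^*) * (E * (x a' * (x a')^*)))).
    by apply: eq_bigr => a PAa; apply: eq_bigr => a' PAa'; rewrite !rdm_split // -/E; ring.
  under eq_bigr do rewrite !big_split /=.
  rewrite !big_split /=; congr (_ + _ + _ + _).
  - by rewrite /Q mulr_sumr; apply: eq_bigr => a _; rewrite mulr_sumr.
  - by rewrite -cross mulr_sumr; apply: eq_bigr => a _; rewrite mulr_sumr.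
  rewrite expr2 /inprod [X in X * _]mulr_sumr [X in _ * X]mulr_sumr mulr_suml.
  by apply: eq_bigr => a _; rewrite mulr_sumr.
by rewrite lerD2r -addrA lerDl addr_ge0 // mulr_ge0 ?inprod_ge0.
Qed.

End OrthogonalSplit.

(* Gram-Schmidt step: make the first [r] right factors orthogonal to the last
   one [e]; what they lose is absorbed into the coefficient [x] of [e]. *)
Lemma schmidt_rank_peel r psi : schmidt_rank_le r.+1 psi ->
  exists psi' x e, [/\ forall a b, PA a -> PB b -> psi a b = psi' a b + x a * e b,
    forall a, inprod PB (psi' a) e = 0 & schmidt_rank_le r psi'].
Proof.
case=> u [v psiE]; pose w := widen_ord (leqnSn r); pose e := v ord_max.
pose al i := inprod PB (v (w i)) e / inprod PB e e.
pose v' i b := v (w i) b - al i * e b.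
exists (fun a b => \sum_(i < r) u (w i) a * v' i b).
exists (fun a => u ord_max a + \sum_(i < r) al i * u (w i) a), e; split.
- move=> a b PAa PBb; rewrite psiE // big_ord_recr /= mulrDl mulr_suml.
  rewrite [RHS]addrCA [RHS]addrC -big_split /=; congr (_ + _).
  by apply: eq_bigr => i _; rewrite /v'; ring.
- move=> a; rewrite inprod_sumZl big1 // => i _.
  by rewrite inprod_proj_orth mulr0.
- by exists (fun i => u (w i)), v'.
Qed.

Lemma rdm_tr_sqr_le r psi : schmidt_rank_le r psi ->
  rdm_tr psi ^+ 2 <= r%:R * rdm_purity psi.
Proof.
elim: r psi => [|r IH] psi.
  case=> u [v psiE]; suff -> : rdm_tr psi = 0 by rewrite expr0n mul0r.
  apply: big1 => a PAa; apply: big1 => b PBb.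
  by rewrite psiE // big_ord0 mul0r.
case/schmidt_rank_peel => psi' [x [e [psi_split psi'_orth /IH le_psi']]].
rewrite (rdm_tr_split psi_split psi'_orth).
apply: le_trans (sqrD_le_mulSn _ _ _ le_psi') _.
- exact: rdm_tr_ge0.
- by rewrite mulr_ge0 ?inprod_ge0.
- exact: rdm_purity_ge0.
by rewrite ler_wpM2l ?rdm_purity_split_ge.
Qed.

End ReducedState.

Definition restrict_bits n (S : {set 'I_n}) (s : bits n) : bits n :=
  [ffun i => (i \in S) && s i].

Lemma supported_restrict n (S : {set 'I_n}) s : supported S (restrict_bits S s).
Proof. by apply/forallP => i; apply/implyP => /negbTE iS; rewrite ffunE iS. Qed.

Lemma restrict_merge n (A : {set 'I_n}) a b :
  supported A a -> restrict_bits A (Defs.merge A a b) = a.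
Proof.
move=> /forallP Aa; apply/ffunP => i; rewrite !ffunE.
by case: ifP => //= iA; move/implyP: (Aa i); rewrite iA => /(_ isT) /negbTE.
Qed.

Lemma sum_bits_merge (V : nmodType) n (A : {set 'I_n}) (F : bits n -> V) :
  \sum_(s : bits n) F s =
  \sum_(a | supported A a) \sum_(b | supported (~: A) b) F (Defs.merge A a b).
Proof.
rewrite (partition_big (restrict_bits A) (supported A)) /=; last first.
  by move=> s _; apply: supported_restrict.
apply: eq_bigr => a Aa.
rewrite (reindex_onto (Defs.merge A a) (restrict_bits (~: A))) /=; last first.
  move=> s /eqP sa; apply/ffunP => i; rewrite -sa !ffunE finset.in_setC.
  by case: (i \in A).
apply: eq_bigl => b; rewrite restrict_merge // eqxx /=.
apply/eqP/forallP => [<- i|Ab].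
  by rewrite ffunE finset.in_setC negbK; case: (i \in A).
apply/ffunP => i; rewrite !ffunE finset.in_setC.
by case: ifP => //= iA; move/implyP: (Ab i); rewrite finset.in_setC iA => /(_ isT) /negbTE.
Qed.

Section Bipartition.
Variables (R : realType) (n : nat) (psi : qstate R n) (A : {set 'I_n}).

Lemma cp_decomp_schmidt_rank r : has_cp_decomp psi r ->
  schmidt_rank_le (supported A) (supported (~: A)) r (fun a b => psi (Defs.merge A a b)).
Proof.
case=> c [phi psiE].
exists (fun i (a : bits n) => c i * \prod_(j in A) phi i j (a j)).
exists (fun i (b : bits n) => \prod_(j | j \notin A) phi i j (b j)) => a b _ _.
rewrite psiE; apply: eq_bigr => i _; rewrite /prod_vec (bigID (mem A)) /= mulrA.
by congr (_ * _ * _); apply: eq_bigr => j jA; rewrite ffunE ?jA // (negbTE jA).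
Qed.

Lemma pure_rdm_tr : is_pure_state psi ->
  rdm_tr (supported A) (supported (~: A)) (fun a b => psi (Defs.merge A a b)) = 1.
Proof. by rewrite /is_pure_state (sum_bits_merge A) => <-. Qed.

Lemma purity_ge_inv_rank r : (0 < r)%N -> is_pure_state psi -> has_cp_decomp psi r ->
  r%:R^-1 <= complex.Re (purity psi A).
Proof.
move=> r_gt0 /pure_rdm_tr tr1 /cp_decomp_schmidt_rank /rdm_tr_sqr_le.
rewrite tr1 expr1n -/(purity psi A); set p := purity psi A.
have p_real : p \is Num.real by apply/ger0_real/rdm_purity_ge0.
have -> : r%:R * p = (r%:R * complex.Re p)%:C%C.
  by rewrite rmorphM rmorph_nat; congr (_ * _); exact/esym/RRe_real.
rewrite lecE => /andP [_ /= rp_ge1].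
have r_pos : (0 : R) < r%:R by rewrite ltr0n.
by rewrite -(ler_pM2l r_pos) mulfV ?gt_eqF.
Qed.

End Bipartition.

Lemma conc_ent_le_rank (R : realType) n (psi : qstate R n) r : (0 < r)%N ->
  is_pure_state psi -> has_cp_decomp psi r -> conc_ent psi <= (r%:R - 1) / r%:R.
Proof.
move=> r_gt0 pure cp; have r0 : (0 : R) < r%:R by rewrite ltr0n.
have sum_ge : 2%:R ^+ n / r%:R <= \sum_(A : {set 'I_n}) complex.Re (purity psi A).
  apply: le_trans (_ : \sum_(A : {set 'I_n}) r%:R^-1 <= _).
    rewrite sumr_const -cardsT -powersetT card_powerset cardsT card_ord.
    by rewrite -[X in _ <= X]mulr_natl natrX.
  by apply: ler_sum => A _; apply: purity_ge_inv_rank.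
have -> : (r%:R - 1) / r%:R = 1 - (2%:R ^+ n)^-1 * (2%:R ^+ n / r%:R) :> R.
  by field; rewrite ?gt_eqF ?exprn_gt0.
by rewrite lerD2l lerN2 ler_wpM2l // invr_ge0 exprn_ge0.
Qed.

Lemma limn_esup_le_ub (R : realType) (u : (\bar R)^nat) (l : \bar R) :
  (forall n, (u n <= l)%E) -> (limn_esup u <= l)%E.
Proof.
move=> ul; apply: le_trans (ereal_inf_lbound _) _.
  by exists setT; [exact: filterT | reflexivity].
by apply: ge_ereal_sup => _ [n _ <-].
Qed.

Lemma sumr_binom (S : pzSemiRingType) n :
  \sum_(k < n.+1) 'C(n, k)%:R = 2%:R ^+ n :> S.
Proof. by rewrite -[2%:R]/(1 + 1 : S) exprD1n; apply: eq_bigr => k _; rewrite expr1n. Qed.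

Section BinomialBounds.
Variables (R : realType) (Rk : nat).

Lemma one_sub_bRE n : 1 - bR Rk n = (2%:R ^+ n)^-1 *
  \sum_(k < n.+1) 'C(n, k)%:R * Num.max Rk%:R^-1 ((2%:R ^+ minn k (n - k))^-1) :> R.
Proof. by rewrite /bR big_mkord subKr. Qed.

Lemma one_sub_bR_ge n : Rk%:R^-1 <= 1 - bR Rk n :> R.
Proof.
have pow2_gt0 : 0 < 2%:R ^+ n :> R by rewrite exprn_gt0.
rewrite one_sub_bRE; apply: le_trans (_ : (2%:R ^+ n)^-1 *
  \sum_(k < n.+1) 'C(n, k)%:R * Rk%:R^-1 <= _).
  by rewrite -mulr_suml sumr_binom mulrA mulVf ?gt_eqF ?mul1r.
apply: ler_wpM2l; first by rewrite invr_ge0 exprn_ge0.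
apply: ler_sum => k _.
by rewrite ler_wpM2l // le_max lexx.
Qed.

(* [2^-min(k, n - k)] is at most [2^-k + 2^-(n - k)], and both of these sum
   against the binomial coefficients to [(3/2)^n]. *)
Lemma one_sub_bR_le n : 1 - bR Rk n <= Rk%:R^-1 + 2%:R * (3%:R / 4%:R) ^+ n :> R.
Proof.
have pow2_gt0 : 0 < 2%:R ^+ n :> R by rewrite exprn_gt0.
set a : R := Rk%:R^-1; set h : R := 2%:R^-1.
have a_ge0 : 0 <= a by rewrite invr_ge0.
have h_ge0 : 0 <= h by rewrite invr_ge0.
rewrite one_sub_bRE; apply: le_trans (_ : (2%:R ^+ n)^-1 *
  \sum_(k < n.+1) 'C(n, k)%:R * (a + (h ^+ k + h ^+ (n - k))) <= _).
  apply: ler_wpM2l; first by rewrite invr_ge0 exprn_ge0.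
  apply: ler_sum => k _.
  rewrite ler_wpM2l // ge_max lerDl !addr_ge0 ?exprn_ge0 //=.
  rewrite -exprVn -/h /minn; case: ifP => _.
    by rewrite addrCA lerDl addr_ge0 ?exprn_ge0.
  by rewrite addrA lerDr addr_ge0 ?exprn_ge0.
have -> : \sum_(k < n.+1) 'C(n, k)%:R * (a + (h ^+ k + h ^+ (n - k)))
        = a * 2%:R ^+ n + (h + 1) ^+ n + (h + 1) ^+ n.
  rewrite -sumr_binom {1}exprD1n exprDn mulr_sumr -!big_split /=.
  by apply: eq_bigr => k _; rewrite expr1n mulr1 !mulr_natl; ring.
have -> : (3%:R / 4%:R : R) ^+ n = (h + 1) ^+ n / 2%:R ^+ n.
  by rewrite -expr_div_n; congr (_ ^+ _); rewrite /h; field.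
by rewrite le_eqVlt; apply/predU1l; field; rewrite gt_eqF.
Qed.

Lemma bR_cvg : (0 < Rk)%N -> (fun n => bR Rk n) @ \oo --> ((Rk%:R - 1) / Rk%:R : R).
Proof.
move=> Rk_gt0.
have -> : (Rk%:R - 1) / Rk%:R = 1 - Rk%:R^-1 :> R.
  by field; rewrite pnatr_eq0 -lt0n.
have -> : (fun n => bR Rk n) = (fun n => 1 - (1 - bR Rk n) : R).
  by apply/funext => n; rewrite subKr.
apply: cvgB; first exact: cvg_cst.
apply: (@squeeze_cvgr _ _ _ _ (fun=> Rk%:R^-1)
  (fun n => Rk%:R^-1 + 2%:R * (3%:R / 4%:R) ^+ n)).
- by apply: nearW => n; rewrite one_sub_bR_ge one_sub_bR_le.
- exact: cvg_cst.
rewrite -[X in _ --> X]addr0; apply: cvgD; first exact: cvg_cst.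
rewrite -(mulr0 2%:R); apply: cvgMl_tmp; apply: cvg_expr.
by rewrite ger0_norm ?divr_ge0 // ltr_pdivrMr // mul1r ltr_nat.
Qed.

End BinomialBounds.

Theorem corollary2 (R : realType) (Rk : nat) (hRk : (0 < Rk)%N) :
  (fun n => @bR R Rk n) @ \oo --> ((Rk%:R - 1) / Rk%:R : R)
  /\
  (limn_esup (fun n : nat =>
      ereal_sup [set (conc_ent psi)%:E
                | psi in [set psi : qstate R n | is_pure_state psi /\ cp_rank_eq psi Rk]])
   <= ((Rk%:R - 1) / Rk%:R)%:E)%E.
Proof.
split; first exact: bR_cvg.
apply: limn_esup_le_ub => n; apply: ge_ereal_sup => _ [psi [pure [cp _]] <-].
by rewrite lee_fin conc_ent_le_rank.
Qed.
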